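(* Let $q$ be a prime power and $n$ a positive integer. Let $g, h\in \mathbb{F}_q[x]$, where $g(x)$ is a monic divisor of $x^n-1$, and let $f, k\in\mathbb{F}_{q^n}[x]$ be such that $k(L_g(\mathbb{F}_{q^n}))\subseteq \mathbb{F}_q^*$. Let $P(x)=f(L_g(x))+k(L_g(x))\cdot L_h(x)$. Then $P$ is a permutation polynomial of $\mathbb{F}_{q^n}$ if and only if both of the following hold: (i) $\gcd(g, h)=1$; (ii) the polynomial $Q(x)=L_g(f(x))+k(x)\cdot L_h(x)$ induces a permutation of the set $L_g(\mathbb{F}_{q^n})=\{L_g(c):c\in\mathbb{F}_{q^n}\}$.
   Context: For a polynomial $u(x)=\sum_{i=0}^m a_i x^i\in\mathbb{F}_q[x]$, its linearized $q$-associate is $L_u(x)=\sum_{i=0}^m a_i x^{q^i}$. A polynomial $P\in\mathbb{F}_{q^n}[x]$ is a permutation polynomial of $\mathbb{F}_{q^n}$ if $c\mapsto P(c)$ is a bijection of $\mathbb{F}_{q^n}$. *)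

From HB Require Import structures.
From mathcomp Require Import all_boot all_order all_algebra all_field.
Set Implicit Arguments. Unset Strict Implicit. Unset Printing Implicit Defensive.
Import GRing.Theory.
Local Open Scope ring_scope.

(* F plays the role of F_q (q = #|F|), L the role of F_{q^n}, an extension of F
   of dimension n.  Elements a of F are embedded in L as a%:A. *)

Definition linq (F : finFieldType) (L : fieldExtType F) (u : {poly F}) (x : L) : L :=
  \sum_(i < size u) (u`_i)%:A * x ^+ (#|F| ^ i)%N.

Definition linq_image (F : finFieldType) (L : fieldExtType F) (u : {poly F}) (y : L) : Prop :=
  exists c : L, y = linq u c.

Definition is_perm_poly (F : finFieldType) (L : fieldExtType F) (P : L -> L) : Prop :=
  bijective P.

Definition permutes_set (T : Type) (S : T -> Prop) (Q : T -> T) : Prop :=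
  [/\ (forall y, S y -> S (Q y)),
      (forall y1 y2, S y1 -> S y2 -> Q y1 = Q y2 -> y1 = y2) &
      (forall z, S z -> exists2 y, S y & Q y = z)].

From HB Require Import structures.
From mathcomp Require Import all_boot all_order all_algebra all_field.
From mathcomp Require Import zify.
Set Implicit Arguments.
Unset Strict Implicit.
Unset Printing Implicit Defensive.
Import GRing.Theory.
Local Open Scope ring_scope.

(* Since k(L_g(x)) lies in F_q and L_g is F_q-linear and commutes with L_h,
   L_g semiconjugates P to Q: L_g(P(x)) = Q(L_g(x)).  So if P permutes F_{q^n},
   Q maps the finite set L_g(F_{q^n}) onto, hence bijectively to, itself.  If Q
   is injective there, P(x1) = P(x2) forces L_g(x1) = L_g(x2) and then
   L_h(x1) = L_h(x2).  Thus P is a permutation iff Q permutes L_g(F_{q^n}) and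
   ker L_g and ker L_h meet trivially.  As L_{uv} = L_u o L_v and L_{x^n-1} = 0
   on F_{q^n}, the latter means gcd(g, h) = 1: Bezout gives one direction; for
   the other, if d = gcd(g, h) is not constant, write x^n - 1 = e d with
   deg e < n; the q-polynomial L_e has degree q^(deg e) < q^n, so it takes a
   nonzero value, and that value lies in ker L_d. *)

Section LinearizedAssociate.
Variables (F : finFieldType) (L : fieldExtType F).
Local Notation q := #|F|.

Lemma pchar_nat_card_expn i : [pchar L].-nat (q ^ i)%N.
Proof.
have [p _ pcharFp] := finPcharP F.
have pcharLp : p \in [pchar L] by rewrite pchar_lalg.
rewrite (eq_pnat _ (pcharf_eq pcharLp)) pnatX; apply/orP; left.
have -> : q = (p ^ logn p q)%N := card_pprimeChar pcharFp.
by rewrite pnatX pnat_id ?orbT ?(pcharf_prime pcharFp).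
Qed.

Lemma expr_card_expnD i (x y : L) :
  (x + y) ^+ (q ^ i)%N = x ^+ (q ^ i)%N + y ^+ (q ^ i)%N.
Proof. exact: exprDn_pchar (pchar_nat_card_expn i). Qed.

Lemma expr_card_expn_alg i (a : F) : (a%:A : L) ^+ (q ^ i)%N = a%:A.
Proof.
have aX : a ^+ (q ^ i) = a.
  by elim: i => [|i IHi]; rewrite ?expr1 // expnSr exprM IHi expf_card.
by rewrite -in_algE -rmorphXn aX.
Qed.

Lemma linq_is_linear (u : {poly F}) : linear (linq (L := L) u).
Proof.
move=> a x y; rewrite /linq scaler_sumr -big_split; apply: eq_bigr => i _ /=.
rewrite -[a *: x]mulr_algl -[a *: (_ * _)]mulr_algl expr_card_expnD exprMn.
by rewrite expr_card_expn_alg mulrDr mulrCA.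
Qed.

HB.instance Definition _ u :=
  GRing.isLinear.Build F L L *:%R (linq u) (linq_is_linear u).

Lemma linq_widen (u : {poly F}) (x : L) N : (size u <= N)%N ->
  linq u x = \sum_(i < N) (u`_i)%:A * x ^+ (q ^ i)%N.
Proof.
move=> uN; rewrite /linq (big_ord_widen N (fun i => (u`_i)%:A * x ^+ (q ^ i)) uN).
rewrite big_mkcond; apply: eq_bigr => i _; case: ltnP => // /(nth_default 0) ->.
by rewrite scale0r mul0r.
Qed.

Lemma linqD (u v : {poly F}) (x : L) : linq (u + v) x = linq u x + linq v x.
Proof.
rewrite !(@linq_widen _ x (maxn (size u) (size v))) ?leq_maxl ?leq_maxr
  ?size_polyD //.
by rewrite -big_split; apply: eq_bigr => i _; rewrite coefD scalerDl mulrDl.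
Qed.

Lemma linqZ (c : F) (u : {poly F}) (x : L) : linq (c *: u) x = c *: linq u x.
Proof.
rewrite !(@linq_widen _ x (size u)) ?size_scale_leq // scaler_sumr.
by apply: eq_bigr => i _; rewrite coefZ -scalerA scalerAl.
Qed.

Lemma linqC (c : F) (x : L) : linq c%:P x = c *: x.
Proof.
rewrite (@linq_widen _ x 1) ?size_polyC ?leq_b1 // big_ord1 coefC /=.
by rewrite expn0 expr1 mulr_algl.
Qed.

Lemma linq_expr_card (u : {poly F}) (x : L) : linq u (x ^+ q) = linq u x ^+ q.
Proof.
have frobD (y z : L) : (y + z) ^+ q = y ^+ q + z ^+ q.
  by have := expr_card_expnD 1 y z; rewrite expn1.
have frob0 : (0 : L) ^+ q = 0 by rewrite expr0n eqn0Ngt (ltnW (finNzRing_gt1 F)).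
rewrite /linq (big_morph _ frobD frob0); apply: eq_bigr => i _.
have := expr_card_expn_alg 1 u`_i; rewrite expn1 exprMn => ->.
by rewrite -!exprM mulnC.
Qed.

Lemma linqXM (u : {poly F}) (x : L) : linq ('X * u) x = linq u x ^+ q.
Proof.
rewrite (@linq_widen _ x (size u).+1); last first.
  by rewrite (leq_trans (size_polyMleq _ _)) // size_polyX.
rewrite big_ord_recl coefXM /= scale0r mul0r add0r -linq_expr_card /linq.
by apply: eq_bigr => i _; rewrite coefXM /= /bump /= add1n expnS -exprM mulnC.
Qed.

Lemma linqM (u v : {poly F}) (x : L) : linq (u * v) x = linq u (linq v x).
Proof.
elim/poly_ind: u v => [|u c IHu] v.
  by rewrite mul0r /linq size_poly0 !big_ord0.
rewrite mulrDl -mulrA mul_polyC linqD IHu linqXM linqZ.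
by rewrite linqD linqC [u * 'X]mulrC linqXM linq_expr_card.
Qed.

Lemma linq_comm (u v : {poly F}) (x : L) : linq u (linq v x) = linq v (linq u x).
Proof. by rewrite -!linqM mulrC. Qed.

Lemma linqXn m (x : L) : linq 'X^m x = x ^+ (q ^ m)%N.
Proof.
elim: m => [|m IHm]; first by rewrite expr0 -polyC1 linqC scale1r expr1.
by rewrite exprS linqXM IHm -exprM expnSr.
Qed.
End LinearizedAssociate.

Section FiniteExtension.
Variables (F : finFieldType) (L : fieldExtType F).
Local Notation q := #|F|.
Local Notation n := (\dim {:L}).
Local Notation LL := (finvect_type L).

Lemma card_finvect : #|LL| = (q ^ n)%N.
Proof. by rewrite -(card_vspacef (Vector.class LL)) card_vspace. Qed.

Lemma expr_card_dim (x : L) : x ^+ (q ^ n)%N = x.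
Proof. by rewrite -card_finvect; exact: (expf_card (x : LL)). Qed.

Lemma size_Xn_sub1 : size ('X^n - 1 : {poly F}) = n.+1.
Proof. by rewrite -polyC1 size_XnsubC // adim_gt0. Qed.

Lemma linq_Xn_sub1 (x : L) : linq ('X^n - 1) x = 0.
Proof. by rewrite linqD -polyCN linqC linqXn expr_card_dim scaleN1r subrr. Qed.

Definition linpoly (u : {poly F}) : {poly L} :=
  \sum_(i < size u) (u`_i)%:A *: 'X^(q ^ i).

Lemma horner_linpoly (u : {poly F}) (x : L) : (linpoly u).[x] = linq u x.
Proof.
rewrite horner_sum; apply: eq_bigr => i _.
by rewrite hornerZ hornerXn mulr_algl.
Qed.

Lemma coef_linpoly (u : {poly F}) i : (linpoly u)`_(q ^ i) = (u`_i)%:A.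
Proof.
rewrite coef_sum.
under eq_bigr => j _ do
  rewrite coefZ coefXn eqn_exp2l ?finNzRing_gt1 // eq_sym mulr_natr mulrb.
rewrite -big_mkcond (big_ord1_eq _ (fun j => (u`_j)%:A : L)).
by case: ltnP => // /(nth_default 0) ->; rewrite scale0r.
Qed.

Lemma size_linpoly_leq (u : {poly F}) :
  (size (linpoly u) <= (q ^ (size u).-1).+1)%N.
Proof.
apply: (leq_trans (size_sum _ _ _)); apply/bigmax_leqP => i _.
rewrite (leq_trans (size_scale_leq _ _)) // size_polyXn ltnS leq_pexp2l //.
  by rewrite ltnW ?finNzRing_gt1.
by rewrite -ltnS prednK ?(leq_ltn_trans _ (ltn_ord i)).
Qed.

Lemma linq_eq0 (u : {poly F}) :
  (size u <= n)%N -> (forall x : L, linq u x = 0) -> u = 0.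
Proof.
move=> un u0; apply/eqP; apply: contraT => nz_u.
have nz_linpoly : linpoly u != 0.
  apply: contraNneq nz_u => lp0; have := coef_linpoly u (size u).-1.
  rewrite lp0 coef0 -lead_coefE => /esym/eqP.
  by rewrite scaler_eq0 oner_eq0 orbF lead_coef_eq0.
suff /eqP : linpoly u = 0 by rewrite (negbTE nz_linpoly).
apply: (roots_geq_poly_eq0 (rs := enum LL)).
- by apply/allP => x _; rewrite /root horner_linpoly u0.
- exact: enum_uniq.
rewrite (leq_trans (size_linpoly_leq u)) // -cardE card_finvect.
by rewrite ltn_exp2l ?finNzRing_gt1 // (leq_trans _ un) // prednK ?size_poly_gt0.
Qed.

Lemma linq_ker_neq0 (d : {poly F}) : d %| 'X^n - 1 -> (1 < size d)%N ->
  exists2 z : L, z != 0 & linq d z = 0.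
Proof.
move=> /dvdpP[e Xn_sub1E] d_gt1.
have nz_e : e != 0.
  by apply/eqP => e0; move: size_Xn_sub1; rewrite Xn_sub1E e0 mul0r size_poly0.
have nz_d : d != 0 by rewrite -size_poly_gt0 ltnW.
have en : (size e <= n)%N.
  have := size_Xn_sub1; rewrite Xn_sub1E size_mul // -subn1.
  move: (size e) (size d) d_gt1 => a b; lia.
have /existsP[w ew] : [exists w : LL, linq e w != 0].
  apply: contraNT nz_e => /existsPn ew0; apply/eqP.
  by apply: (linq_eq0 en) => w; apply/eqP/negPn/ew0.
by exists (linq e w) => //; rewrite -linqM mulrC -Xn_sub1E linq_Xn_sub1.
Qed.

Lemma coprimep_linqP (g h : {poly F}) : g %| 'X^n - 1 ->
  reflect (forall z : L, linq g z = 0 -> linq h z = 0 -> z = 0) (coprimep g h).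
Proof.
move=> gX; apply: (iffP idP) => [cop z gz hz | ker_gh].
  have /Bezout_eq1_coprimepP[[a b] /= ab1] := cop.
  by rewrite -[z]scale1r -linqC polyC1 -ab1 linqD !linqM gz hz !raddf0 addr0.
apply/coprimepP => d /dvdpP[g' gE] /dvdpP[h' hE]; rewrite -size_poly_eq1.
have dX : d %| 'X^n - 1 by rewrite (dvdp_trans _ gX) // gE dvdp_mull.
have nz_d : d != 0.
  by apply: contraTneq dX => ->; rewrite dvd0p -size_poly_eq0 size_Xn_sub1.
rewrite eqn_leq size_poly_gt0 nz_d andbT leqNgt.
apply/negP => /(linq_ker_neq0 dX)[z /eqP nz_z dz]; apply: nz_z.
by apply: ker_gh; rewrite ?gE ?hE linqM dz raddf0.
Qed.
End FiniteExtension.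

Lemma semiconj_permutes_image (T : finType) (A P Q : T -> T) :
  bijective P -> (forall x, A (P x) = Q (A x)) ->
  permutes_set (fun y => exists c, y = A c) Q.
Proof.
case=> Pinv PK PinvK AP; pose S := [set A c | c in T].
have QS_onto c : Q (A (Pinv c)) = A c by rewrite -AP PinvK.
split.
- by move=> _ [c ->]; exists (P c).
- have S_sub : S \subset Q @: S.
    by apply/subsetP => _ /imsetP[c _ ->]; rewrite -QS_onto !imset_f.
  have /imset_injP Qinj : #|Q @: S| == #|S|.
    by rewrite eqn_leq leq_imset_card subset_leq_card.
  by move=> _ _ [c1 ->] [c2 ->]; apply: Qinj; apply: imset_f.
- by move=> _ [c ->]; exists (A (Pinv c)); [exists (Pinv c) | rewrite QS_onto].
Qed.

Section PermutationPolynomial.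
Variables (F : finFieldType) (L : fieldExtType F).
Variables (g h : {poly F}) (f k : {poly L}).
Hypothesis k_scalar : forall c : L, exists2 a : F, a != 0 & k.[linq g c] = a%:A.

Let P x := f.[linq g x] + k.[linq g x] * linq h x.
Let Q y := linq g f.[y] + k.[y] * linq h y.

Lemma linq_semiconj x : linq g (P x) = Q (linq g x).
Proof.
have [a _ ka] := k_scalar x.
by rewrite /P /Q ka !mulr_algl linearD linearZ_LR linq_comm.
Qed.

Lemma perm_poly_inj :
  (forall z : L, linq g z = 0 -> linq h z = 0 -> z = 0) ->
  (forall y1 y2 : L,
     linq_image g y1 -> linq_image g y2 -> Q y1 = Q y2 -> y1 = y2) ->
  injective P.
Proof.
move=> ker_gh Qinj x1 x2 Px12.
have gx12 : linq g x1 = linq g x2.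
  by apply: Qinj; [exists x1 | exists x2 | rewrite -!linq_semiconj Px12].
have [a nz_a ka] := k_scalar x1.
have hx12 : linq h x1 = linq h x2.
  move: Px12; rewrite /P -gx12 ka !mulr_algl => /addrI /scalerI; exact.
by apply: subr0_eq; apply: ker_gh; rewrite linearB /= ?gx12 ?hx12 subrr.
Qed.

End PermutationPolynomial.

Theorem theorem2p5 (F : finFieldType) (L : fieldExtType F) (n : nat)
  (hn : (0 < n)%N) (hdim : \dim {: L}%VS = n)
  (g h : {poly F}) (f k : {poly L})
  (hgmon : g \is monic) (hgdiv : g %| 'X^n - 1)
  (hk : forall c : L, exists2 a : F, a != 0 & k.[linq g c] = a%:A) :
  is_perm_poly (fun x : L => f.[linq g x] + k.[linq g x] * linq h x)
  <->
  (coprimep g h /\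
   permutes_set (linq_image g) (fun x : L => linq g f.[x] + k.[x] * linq h x)).
Proof.
rewrite -{}hdim in hgdiv.
split=> [Pbij | [/(coprimep_linqP h hgdiv) ker_gh [_ Qinj _]]].
  split; last first.
    exact: (semiconj_permutes_image (T := finvect_type L) Pbij
              (linq_semiconj h f hk)).
  apply/(coprimep_linqP h hgdiv) => z gz hz.
  by apply: (bij_inj Pbij); rewrite /= gz hz !raddf0.
exact: (@injF_bij (finvect_type L) _ (perm_poly_inj hk ker_gh Qinj)).
Qed.
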